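(* Let $q$ be a prime power, let $r,m>1$ be integers, $n=rm$, and let $k$ be an integer with $1<k\le m$. Let $s_1,s_2\ge1$, let $V_{1,1},\dots,V_{1,s_1}\in\mathcal{G}_q(m,k)$ and $\mathcal{C}_1=\bigcup_{h_1=1}^{s_1}\mathrm{Orb}_{\mathbb{F}_{q^m}^*}(V_{1,h_1})$. For $h_2=1,\dots,s_2$ let $\Phi_{2,h_2}:\mathbb{F}_{q^m}\to\mathbb{F}_{q^n}$ be an injective $\mathbb{F}_q$-linear map, $V_{2,h_2}=\Phi_{2,h_2}(\mathbb{F}_{q^m})$, and $\mathcal{C}_2=\bigcup_{h_2=1}^{s_2}\mathrm{Orb}_{\mathbb{F}_{q^n}^*}(V_{2,h_2})\subseteq\mathcal{G}_q(n,m)$. Define $$\mathcal{C}_2\odot\mathcal{C}_1=\bigcup_{h_2=1}^{s_2}\bigcup_{h_1=1}^{s_1}\bigcup_{\alpha\in\mathbb{F}_{q^m}^*}\mathrm{Orb}_{\mathbb{F}_{q^n}^*}\big(\Phi_{2,h_2}(\alpha V_{1,h_1})\big)\subseteq\mathcal{G}_q(n,k).$$ If $\mathcal{C}_2$ is full-length and $d(\mathcal{C}_2)>2(m-k)$, then $\mathcal{C}_2\odot\mathcal{C}_1$ is a full-length multi-orbit cyclic subspace code.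
   Context: For positive integers $k\le N$, $\mathcal{G}_q(N,k)$ denotes the set of $k$-dimensional $\mathbb{F}_q$-subspaces of $\mathbb{F}_{q^N}$. The subspace distance is $d(U,V)=\dim_{\mathbb{F}_q}(U+V)-\dim_{\mathbb{F}_q}(U\cap V)$, and $d(\mathcal{C})=\min\{d(U,V):U,V\in\mathcal{C},U\ne V\}$. For $V\in\mathcal{G}_q(N,k)$, $\mathrm{Orb}_{\mathbb{F}_{q^N}^*}(V)=\{\beta V:\beta\in\mathbb{F}_{q^N}^*\}$; a (multi-orbit) cyclic subspace code is a finite union of such orbits. A one-orbit code $\mathrm{Orb}_{\mathbb{F}_{q^N}^*}(V)$ is full-length if $\{\beta\in\mathbb{F}_{q^N}^*:\beta V=V\}=\mathbb{F}_q^*$; a union $\bigcup_i\mathrm{Orb}(V_i)$ is full-length if each $\mathrm{Orb}(V_i)$ is full-length. *)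

From HB Require Import structures.
From mathcomp Require Import all_boot all_order all_algebra all_field.
Set Implicit Arguments. Unset Strict Implicit. Unset Printing Implicit Defensive.
Import GRing.Theory.
Local Open Scope ring_scope.

(* F_q is a finite field K; F_{q^N} is a field extension L of K with \dim {:L} = N.
   Subspaces are K-subspaces {vspace L}; the F_q^* inside L is (1%VS) minus 0. *)

Section Defs.
Variable K : finFieldType.

Definition smul (L : fieldExtType K) (b : L) (V : {vspace L}) : {vspace L} :=
  (amull b @: V)%VS.

Definition Orb (L : fieldExtType K) (V : {vspace L}) : {vspace L} -> Prop :=
  fun U => exists2 b : L, b != 0 & U = smul b V.

Definition sdist (L : fieldExtType K) (U V : {vspace L}) : nat :=
  (\dim (U + V) - \dim (U :&: V))%N.

Definition full_length_orb (L : fieldExtType K) (V : {vspace L}) : Prop :=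
  forall b : L, b != 0 -> (smul b V = V <-> b \in 1%VS).

End Defs.

From HB Require Import structures.
From mathcomp Require Import all_boot all_order all_algebra all_field.
From mathcomp Require Import zify.
Import GRing.Theory.
Local Open Scope ring_scope.

(* Let W = Phi(a V) and V2 = Phi(F_{q^m}), so W <= V2 with dim W = k and
   dim V2 = m.  If bW = W then W <= bV2 :&: V2, hence d(bV2, V2) <= 2(m - k);
   as bV2 and V2 both lie in C2, the distance bound forces bV2 = V2, and the
   full length of Orb(V2) gives b in F_q^*. *)

Lemma limg_dim_inj (F : fieldType) (aT rT : vectType F) (f : 'Hom(aT, rT))
    (U : {vspace aT}) :
  injective f -> \dim (f @: U) = \dim U.
Proof. by move=> /lker0P/eqP f_inj; apply: limg_dim_eq; rewrite f_inj capv0. Qed.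

Section Subspaces.
Context {K : finFieldType} {L : fieldExtType K}.
Implicit Types (b : L) (U V W X : {vspace L}).

Lemma sdist_le_common_subspace U W X :
  \dim U = \dim W -> (X <= U)%VS -> (X <= W)%VS ->
  (sdist U W <= 2 * (\dim U - \dim X))%N.
Proof.
move=> dUW XU XW; rewrite /sdist.
have := dimv_sum_cap U W; rewrite -dUW.
have capU : (\dim (U :&: W) <= \dim U)%N by apply/dimvS/capvSl.
have Xcap : (\dim X <= \dim (U :&: W))%N by apply/dimvS; rewrite subv_cap XU.
lia.
Qed.

Lemma dim_smul b V : b != 0 -> \dim (smul b V) = \dim V.
Proof. by move=> b0; apply/limg_dim_inj/lker0P/lker0_amull; rewrite unitfE. Qed.

Lemma smul1 V : smul 1 V = V.
Proof. by rewrite /smul amull1 lim1g. Qed.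

Lemma smul_scalar b V : b \in 1%VS -> b != 0 -> smul b V = V.
Proof.
case/vlineP=> c -> cA0; have c0 : c != 0 by apply: contraNneq cA0 => ->; rewrite scale0r.
apply/eqP; rewrite eqEdim dim_smul // leqnn andbT.
by apply/subvP=> _ /memv_imgP[v vV ->]; rewrite lfunE /= -scalerAl mul1r memvZ.
Qed.

Lemma sdist_smul_le_of_stable b V W :
  b != 0 -> (W <= V)%VS -> smul b W = W ->
  (sdist (smul b V) V <= 2 * (\dim V - \dim W))%N.
Proof.
move=> b0 WV bW; rewrite -[X in (_ <= 2 * (X - _))%N](@dim_smul b V b0).
by apply: sdist_le_common_subspace; rewrite ?dim_smul // -bW; apply: limgS.
Qed.

Lemma full_length_orb_sub V W :
  full_length_orb V -> (forall b, b != 0 -> smul b W = W -> smul b V = V) ->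
  full_length_orb W.
Proof.
move=> flV stabWV b b0; split=> [/(stabWV b b0)|b1].
  by case: (flV b b0).
exact: smul_scalar.
Qed.

End Subspaces.

Theorem proposition2p9 (K : finFieldType) (Lm Ln : fieldExtType K)
  (r m n k s1 s2 : nat)
  (hr : (1 < r)%N) (hm : (1 < m)%N) (hn : n = (r * m)%N)
  (hk1 : (1 < k)%N) (hkm : (k <= m)%N)
  (hdimm : \dim {:Lm} = m) (hdimn : \dim {:Ln} = n)
  (hs1 : (1 <= s1)%N) (hs2 : (1 <= s2)%N)
  (V1 : 'I_s1 -> {vspace Lm}) (hV1 : forall h, \dim (V1 h) = k)
  (Phi2 : 'I_s2 -> 'Hom(Lm, Ln)) (hPhi : forall h, injective (Phi2 h)) :
  let V2 := fun h => (Phi2 h @: fullv)%VS in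
  let C2 := fun U : {vspace Ln} => exists h, Orb (V2 h) U in
  (forall h, full_length_orb (V2 h)) ->
  (forall U W, C2 U -> C2 W -> U <> W -> (2 * (m - k) < sdist U W)%N) ->
  forall (h2 : 'I_s2) (h1 : 'I_s1) (a : Lm), a != 0 ->
    \dim (Phi2 h2 @: smul a (V1 h1))%VS = k /\
    full_length_orb (Phi2 h2 @: smul a (V1 h1))%VS.
Proof.
move=> V2 C2 flV2 distC2 h2 h1 a a0.
have dimW : \dim (Phi2 h2 @: smul a (V1 h1)) = k by rewrite limg_dim_inj ?dim_smul.
have dimV2 : \dim (V2 h2) = m by rewrite limg_dim_inj.
split=> //; apply: (full_length_orb_sub _ _ (flV2 h2)) => b b0 bW.
apply/eqP; apply: contraT => /eqP bV2_neq.
have bV2_in_C2 : C2 (smul b (V2 h2)) by exists h2, b.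
have V2_in_C2 : C2 (V2 h2) by exists h2, 1; rewrite ?oner_neq0 ?smul1.
have W_sub_V2 : (Phi2 h2 @: smul a (V1 h1) <= V2 h2)%VS by apply/limgS/subvf.
have := distC2 _ _ bV2_in_C2 V2_in_C2 bV2_neq.
by rewrite ltnNge -dimV2 -dimW sdist_smul_le_of_stable.
Qed.
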